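(* The homology class $[u_{\mathrm{edge}}(\bar e)]\in H_1(\Sigma;\mathbb Z)$ is divisible by $3$.
   Context: Setup: $D\subset\mathbb R^3$ regular dodecahedron centered at $0$, $\mathcal I\subset\mathrm{SO}(3)$ its rotation group, $\iota=-\mathrm{id}$. $\mathcal K$ = the five inscribed cubes; $V_o:=\mathbb Z^{\mathcal K}/\mathbb Z(\sum_{e\in\mathcal K}e)$, $\bar e$ the image of $e$. $\hat\Sigma$: surface $D$ with an $\mathcal I$- and $\iota$-invariant small open equilateral triangle removed around each vertex; $\Sigma$: $\hat\Sigma$ with boundary points $p\sim\iota p$ identified (closed oriented genus-10 surface). For an oriented edge $y$ of $D$ with initial point $in(y)$, $\delta_y$ is the loop in $\Sigma$ formed by the edge-type cell $y$ and the cell $\iota y$. For fixed $e\in\mathcal K$, $E$ is one of the two 4-element sets of pairwise non-adjacent (in the cube) vertices of $e$. $u_{\mathrm{edge}}:V_o\to Z_1(\Sigma)$ is the $\mathbb Z\mathcal I$-homomorphism with $u_{\mathrm{edge}}(\bar e)=\sum_{x\in E}\sum_{y:\,in(y)=x}\delta_y$. *)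

From HB Require Import structures.
From mathcomp Require Import all_boot all_order all_algebra.
Set Implicit Arguments.
Unset Strict Implicit.
Unset Printing Implicit Defensive.
Import GRing.Theory Num.Theory.
Local Open Scope ring_scope.

(* (a, b) represents a + b * phi, with phi^2 = phi + 1.  Since 1 and phi are
   linearly independent over Q, equality of pairs is equality of reals. *)
Definition Zphi := (int * int)%type.
Definition zadd (a b : Zphi) : Zphi := (a.1 + b.1, a.2 + b.2).
Definition zopp (a : Zphi) : Zphi := (- a.1, - a.2).
Definition zsub (a b : Zphi) : Zphi := zadd a (zopp b).
Definition zmul (a b : Zphi) : Zphi :=
  (a.1 * b.1 + a.2 * b.2, a.1 * b.2 + a.2 * b.1 + a.2 * b.2).
(* a + b*phi > 0  <=>  (2a+b) + b*sqrt 5 > 0 *)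
Definition zpos (a : Zphi) : bool :=
  let c := 2 * a.1 + a.2 in let b := a.2 in
  if (0 <= c) && (0 <= b) then (c != 0) || (b != 0)
  else if (c < 0) && (b <= 0) then false
  else if 0 <= c then 5 * b * b < c * c
  else c * c < 5 * b * b.

Definition z0 : Zphi := (0, 0).
Definition z1 : Zphi := (1, 0).
Definition zm1 : Zphi := (-1, 0).
Definition zphi : Zphi := (0, 1).
Definition zmphi : Zphi := (0, -1).
Definition ziphi : Zphi := (-1, 1).   (* 1/phi = phi - 1 *)
Definition zmiphi : Zphi := (1, -1).

Definition P3 := (Zphi * Zphi * Zphi)%type.
Definition pt (a b c : Zphi) : P3 := (a, b, c).
Definition pX (p : P3) := p.1.1.
Definition pY (p : P3) := p.1.2.
Definition pZ (p : P3) := p.2.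
Definition psub (p q : P3) : P3 :=
  pt (zsub (pX p) (pX q)) (zsub (pY p) (pY q)) (zsub (pZ p) (pZ q)).
Definition pneg (p : P3) : P3 := pt (zopp (pX p)) (zopp (pY p)) (zopp (pZ p)).
Definition dot (p q : P3) : Zphi :=
  zadd (zadd (zmul (pX p) (pX q)) (zmul (pY p) (pY q))) (zmul (pZ p) (pZ q)).
Definition cross (p q : P3) : P3 :=
  pt (zsub (zmul (pY p) (pZ q)) (zmul (pZ p) (pY q)))
     (zsub (zmul (pZ p) (pX q)) (zmul (pX p) (pZ q)))
     (zsub (zmul (pX p) (pY q)) (zmul (pY p) (pX q))).
Definition sqdist (p q : P3) : Zphi := dot (psub p q) (psub p q).

Inductive axis := Ax0 | Ax1 | Ax2.
Definition axis_to_nat (a : axis) : nat :=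
  match a with Ax0 => 0 | Ax1 => 1 | Ax2 => 2 end%N.
Definition nat_to_axis (n : nat) : option axis :=
  match n with 0 => Some Ax0 | 1 => Some Ax1 | 2 => Some Ax2 | _ => None end%N.
Lemma axis_to_natK : pcancel axis_to_nat nat_to_axis. Proof. by case. Qed.
HB.instance Definition _ := Countable.copy axis (pcan_type axis_to_natK).
Lemma axis_enumP : Finite.axiom [:: Ax0; Ax1; Ax2]. Proof. by case. Qed.
HB.instance Definition _ := isFinite.Build axis axis_enumP.

Definition shift (k : axis) (p : P3) : P3 :=
  match k with
  | Ax0 => p
  | Ax1 => pt (pY p) (pZ p) (pX p)
  | Ax2 => pt (pZ p) (pX p) (pY p)
  end.
Definition sgn (b : bool) (a : Zphi) : Zphi := if b then a else zopp a.

(* Standard coordinates: the 8 points (+-1,+-1,+-1) and the 12 points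
   (0,+-1/phi,+-phi), (+-1/phi,+-phi,0), (+-phi,0,+-1/phi). *)
Definition V := ((bool * bool * bool) + (bool * bool * axis))%type.
Definition coords (v : V) : P3 :=
  match v with
  | inl (a, b, c) => pt (sgn a z1) (sgn b z1) (sgn c z1)
  | inr (a, b, k) => shift k (pt z0 (sgn a ziphi) (sgn b zphi))
  end.

(* edges of D: squared edge length (2/phi)^2 = 8 - 4 phi *)
Definition adj (x y : V) : bool := sqdist (coords x) (coords y) == (8, -4).

Definition anti (x : V) : V :=
  match x with
  | inl (a, b, c) => inl (~~ a, ~~ b, ~~ c)
  | inr (a, b, k) => inr (~~ a, ~~ b, k)
  end.
Lemma coords_anti x : coords (anti x) = pneg (coords x).
Proof.
by case: x => [[[a b] c]|[[a b] k]]; [case: a; case: b; case: c | case: a; case: b; case: k].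
Qed.

(* exactly one of x, anti x is "canonical" *)
Definition canon (x : V) : bool :=
  match x with inl (a, _, _) => a | inr (a, _, _) => a end.
(* an injective numbering of the vertices, used only to fix orientations *)
Definition vcode (x : V) : nat :=
  match x with
  | inl (a, b, c) => (4 * a + 2 * b + c)%N
  | inr (a, b, k) => (8 + 4 * axis_to_nat k + 2 * a + b)%N
  end.

(* faces of D: the vertices on the supporting plane  <n, v> = 1 + phi  for
   the 12 outward face normals n = shift k (0, +-phi, +-1) *)
Definition F := (bool * bool * axis)%type.
Definition normal (f : F) : P3 :=
  let: (a, b, k) := f in shift k (pt z0 (sgn a zphi) (sgn b z1)).
Definition on_face (f : F) (v : V) : bool := dot (normal f) (coords v) == (1, 1).
(* the oriented edge x -> z of face f runs counterclockwise seen from outside *)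
Definition ccw (f : F) (x z : V) : bool :=
  zpos (dot (cross (coords x) (coords z)) (normal f)).

(* For an oriented edge (x,z) of D, q(x,z) is the corner of the small triangle
   around x lying on the edge xz.  In Sigma, q(x,z) ~ q(iota x, iota z).
   0-cells : the classes of the q(x,z); representative (x,z) with canon x.
   1-cells : edge-type cells {x,z} (oriented from q(x,z) to q(z,x), stored
             as (x,z) with vcode x < vcode z), and arc cells: the boundary arc
             of the triangle around x from q(x,a) to q(x,b) (stored as
             (x,a,b) with vcode a < vcode b and canon x; the arc around
             iota x is identified with it via iota).
   2-cells : the 12 truncated faces (decagons).
   Chains are integer functions on the ambient index types V*V, (V*V)+(V*V*V),
   F; a chain of Sigma is one supported on genuine cells (the predicates
   pcell_p, cell1_p).  All maps below produce such chains. *)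
Definition pcell_p : pred (V * V) := fun p => adj p.1 p.2 && canon p.1.
Definition ecell_p : pred (V * V) := fun p => adj p.1 p.2 && (vcode p.1 < vcode p.2)%N.
Definition acell_p : pred (V * V * V) := fun t =>
  [&& adj t.1.1 t.1.2, adj t.1.1 t.2, (vcode t.1.2 < vcode t.2)%N & canon t.1.1].
Definition Cell1 := ((V * V) + (V * V * V))%type.
Definition cell1_p : pred Cell1 := fun c =>
  match c with inl e => ecell_p e | inr t => acell_p t end.

Definition C0 := {ffun (V * V) -> int}.
Definition C1 := {ffun Cell1 -> int}.
Definition C2 := {ffun F -> int}.

Definition ind (b : bool) : int := (nat_of_bool b)%:Z.

Definition gen0 (x z : V) : C0 :=
  let p := if canon x then (x, z) else (anti x, anti z) in
  [ffun c : V * V => ind (c == p)].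

Definition gen1E (x z : V) : C1 :=
  if (vcode x < vcode z)%N then [ffun c : Cell1 => ind (c == inl (x, z))]
  else - [ffun c : Cell1 => ind (c == inl (z, x))].

Definition gen1A (x a b : V) : C1 :=
  let t := if canon x then (x, a, b) else (anti x, anti a, anti b) in
  if (vcode t.1.2 < vcode t.2)%N then [ffun c : Cell1 => ind (c == inr t)]
  else - [ffun c : Cell1 => ind (c == inr (t.1.1, t.2, t.1.2))].

Definition bd1 (c : Cell1) : C0 :=
  match c with
  | inl e => gen0 e.2 e.1 - gen0 e.1 e.2
  | inr t => gen0 t.1.1 t.2 - gen0 t.1.1 t.1.2
  end.

Definition boundary1 (ch : C1) : C0 := \sum_(c : Cell1 | cell1_p c) bd1 c *~ ch c.

(* boundary of the decagon f, traversed counterclockwise: the edge cell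
   x -> z, then the arc around z from q(z,x) to q(z,w), w the next vertex *)
Definition bd2 (f : F) : C1 :=
  \sum_(xz : V * V | [&& on_face f xz.1, on_face f xz.2, adj xz.1 xz.2 & ccw f xz.1 xz.2])
     (gen1E xz.1 xz.2 +
      \sum_(w : V | [&& on_face f w, adj xz.2 w & w != xz.1]) gen1A xz.2 xz.1 w).

Definition boundary2 (b : C2) : C1 := \sum_(f : F) bd2 f *~ b f.

Definition delta (x z : V) : C1 := gen1E x z - gen1E (anti x) (anti z).

Definition u_edge (E : {set V}) : C1 :=
  \sum_(x in E) \sum_(z : V | adj x z) delta x z.

(* The standard cube {0,1}^3 = bool*bool*bool; two of its vertices are
   adjacent iff their Hamming distance is 1. *)
Definition hamming (a b : bool * bool * bool) : nat :=
  ((a.1.1 != b.1.1) + (a.1.2 != b.1.2) + (a.2 != b.2))%N.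

From mathcomp Require Import all_boot all_order all_algebra.
Set Implicit Arguments.
Unset Strict Implicit.
Unset Printing Implicit Defensive.
Import GRing.Theory.
Local Open Scope ring_scope.

(* Let E be a 4-set of pairwise non-adjacent vertices of the cube e.
   In the cube {0,1}^3 such a set is one of the two parity classes, so any two
   of its points are at Hamming distance 2; since the cube sits in D up to a
   scale factor, f @: E is a regular tetrahedron of vertices of D.  An
   exhaustive search shows that every such tetrahedron is one of 10 listed
   ones (two in each of the 5 inscribed cubes).  For each of them we exhibit a 2-chain b (integer
   weights on the 12 decagons) such that u_edge - boundary2 b has all its
   coefficients divisible by 3, and check that one third of it is a cycle. *)

Definition u_edge_div3 (U : {set V}) : Prop :=
  exists z : C1,
    (forall c, ~~ cell1_p c -> z c = 0) /\ boundary1 z = 0 /\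
    exists b : C2, u_edge U = z *~ 3 + boundary2 b.

(* A duplicate-free exhaustive list of a finite type enumerates it up to order;
   this lets big sums over V, F and V * V be evaluated along explicit lists. *)
Lemma index_enum_perm (T : finType) (s : seq T) :
  uniq s -> (forall x, x \in s) -> perm_eq (index_enum T) s.
Proof.
move=> s_uniq s_full; apply: uniq_perm => [||x]; rewrite ?index_enum_uniq //.
by rewrite mem_index_enum s_full.
Qed.

Definition vertices : seq V :=
  [:: inl (true,true,true); inl (true,true,false); inl (true,false,true);
      inl (true,false,false); inl (false,true,true); inl (false,true,false);
      inl (false,false,true); inl (false,false,false);
      inr (true,true,Ax0); inr (true,true,Ax1); inr (true,true,Ax2);
      inr (true,false,Ax0); inr (true,false,Ax1); inr (true,false,Ax2);
      inr (false,true,Ax0); inr (false,true,Ax1); inr (false,true,Ax2);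
      inr (false,false,Ax0); inr (false,false,Ax1); inr (false,false,Ax2)].
Definition faces : seq F :=
  [:: (true,true,Ax0); (true,true,Ax1); (true,true,Ax2);
      (true,false,Ax0); (true,false,Ax1); (true,false,Ax2);
      (false,true,Ax0); (false,true,Ax1); (false,true,Ax2);
      (false,false,Ax0); (false,false,Ax1); (false,false,Ax2)].
Definition vertex_pairs : seq (V * V) := [seq (x, y) | x <- vertices, y <- vertices].

Lemma mem_vertices v : v \in vertices.
Proof. by case: v => [[[[] []] []]|[[[] []] []]]. Qed.

Lemma perm_vertices : perm_eq (index_enum V) vertices.
Proof. by apply: index_enum_perm; [vm_compute | exact: mem_vertices]. Qed.

Lemma perm_faces : perm_eq (index_enum F) faces.
Proof. by apply: index_enum_perm; [vm_compute | case=> [[[] []] []]]. Qed.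

Lemma perm_vertex_pairs : perm_eq (index_enum (V * V)%type) vertex_pairs.
Proof.
apply: index_enum_perm => [|[x y]]; first by vm_compute.
by apply: (allpairs_f pair); apply: mem_vertices.
Qed.

Section SparseChains.
Variable T : finType.
Implicit Types s t : seq (T * int).

(* A sparse chain is a list of (cell, coefficient) pairs, repetitions allowed;
   [coef s c] is the total coefficient of c and [chain_of s] the chain itself.
   [coef] is a fold (not a big sum) so that it evaluates under vm_compute. *)
Definition coef s (c : T) : int :=
  foldr (fun p acc => (if p.1 == c then p.2 else 0) + acc) 0 s.
Definition chain_of s : {ffun T -> int} := [ffun c => coef s c].
Definition scale (k : int) s := [seq (p.1, p.2 * k) | p <- s].

Lemma coef_cat s t c : coef (s ++ t) c = coef s c + coef t c.
Proof. by elim: s => [|p s IH] /=; rewrite ?add0r // IH addrA. Qed.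

Lemma chain_of_cat s t : chain_of (s ++ t) = chain_of s + chain_of t.
Proof. by apply/ffunP => c; rewrite !ffunE coef_cat. Qed.

Lemma chain_of_nil : chain_of [::] = 0.
Proof. by apply/ffunP => c; rewrite !ffunE. Qed.

Lemma chain_of_scale k s : chain_of (scale k s) = chain_of s *~ k.
Proof.
apply/ffunP => c; rewrite ffunMzE !ffunE.
elim: s => [|p s IH] /=; first by rewrite mul0rz.
rewrite IH mulrzDl; congr (_ + _).
by case: (p.1 == c); [exact: (esym (mulrzz _ _)) | exact: (esym (mul0rz _ _))].
Qed.

Lemma chain_of_flatten (I : Type) (r : seq I) (P : pred I) (G : I -> seq (T * int)) :
  \sum_(i <- r | P i) chain_of (G i) = chain_of (flatten [seq G i | i <- r & P i]).
Proof.
elim: r => [|i r IH]; first by rewrite big_nil chain_of_nil.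
by rewrite big_cons /=; case: (P i); rewrite //= IH chain_of_cat.
Qed.

Lemma chain_of_unit (c0 : T) : [ffun c => ind (c == c0)] = chain_of [:: (c0, 1)].
Proof. by apply/ffunP => c; rewrite !ffunE /= addr0 eq_sym; case: eqP. Qed.

Lemma chain_of_opp_unit (c0 : T) : - [ffun c => ind (c == c0)] = chain_of [:: (c0, -1)].
Proof. by apply/ffunP => c; rewrite !ffunE /= addr0 eq_sym; case: eqP. Qed.

Lemma coef_notin s c : c \notin map fst s -> coef s c = 0.
Proof.
elim: s => [|p s IH] //=; rewrite in_cons negb_or => /andP [cp cs].
by rewrite IH // eq_sym (negbTE cp) addr0.
Qed.

Definition same_chain s t := all (fun c => coef s c == coef t c) (map fst (s ++ t)).

Lemma same_chainP s t : same_chain s t -> chain_of s = chain_of t.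
Proof.
move=> /allP same; apply/ffunP => c; rewrite !ffunE.
have [/same/eqP //|] := boolP (c \in map fst (s ++ t)).
by rewrite map_cat mem_cat negb_or => /andP [cs ct]; rewrite !coef_notin.
Qed.

Lemma coef_supp (Q : pred T) s c : all (fun p => Q p.1) s -> ~~ Q c -> coef s c = 0.
Proof.
elim: s => [|p s IH] //= /andP [Qp Qs] nQc.
by rewrite IH // addr0; case: eqP => // pc; rewrite -pc Qp in nQc.
Qed.

Lemma sum_coef (M : zmodType) (P : pred T) (G : T -> M) s :
  \sum_(c | P c) G c *~ coef s c = \sum_(p <- s | P p.1) G p.1 *~ p.2.
Proof.
elim: s => [|p s IH]; first by rewrite big_nil big1 // => c _; rewrite mulr0z.
rewrite big_cons -IH /=.
under eq_bigr do rewrite mulrzDr.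
rewrite big_split /=.
have -> : \sum_(c | P c) G c *~ (if p.1 == c then p.2 else 0) =
          (if P p.1 then G p.1 *~ p.2 else 0).
  rewrite big_mkcond (bigD1_seq p.1 (mem_index_enum _) (index_enum_uniq _)) /=.
  rewrite eqxx big1 ?addr0 => [|c cp]; first by case: (P p.1).
  by rewrite eq_sym (negbTE cp) mulr0z; case: (P c).
by case: (P p.1); rewrite ?add0r.
Qed.

End SparseChains.

Definition gen0_list (x z : V) : seq ((V * V) * int) :=
  [:: ((if canon x then (x, z) else (anti x, anti z)), 1)].
Definition gen1E_list (x z : V) : seq (Cell1 * int) :=
  if (vcode x < vcode z)%N then [:: (inl (x, z), 1)] else [:: (inl (z, x), -1)].
Definition gen1A_list (x a b : V) : seq (Cell1 * int) :=
  let t := if canon x then (x, a, b) else (anti x, anti a, anti b) in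
  if (vcode t.1.2 < vcode t.2)%N then [:: (inr t, 1)]
  else [:: (inr (t.1.1, t.2, t.1.2), -1)].
Definition delta_list (x z : V) : seq (Cell1 * int) :=
  gen1E_list x z ++ scale (-1) (gen1E_list (anti x) (anti z)).
Definition u_edge_list (P : pred V) : seq (Cell1 * int) :=
  flatten [seq flatten [seq delta_list x z | z <- vertices & adj x z]
          | x <- vertices & P x].
Definition bd2_list (f : F) : seq (Cell1 * int) :=
  flatten [seq gen1E_list xz.1 xz.2 ++
      flatten [seq gen1A_list xz.2 xz.1 w
              | w <- vertices & [&& on_face f w, adj xz.2 w & w != xz.1]]
    | xz <- vertex_pairs &
        [&& on_face f xz.1, on_face f xz.2, adj xz.1 xz.2 & ccw f xz.1 xz.2]].
Definition face_chain (w : seq int) : C2 := [ffun f => nth 0 w (index f faces)].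
Definition boundary2_list (w : seq int) : seq (Cell1 * int) :=
  flatten [seq scale (nth 0 w (index f faces)) (bd2_list f) | f <- faces & true].
Definition bd1_list (c : Cell1) : seq ((V * V) * int) :=
  match c with
  | inl e => gen0_list e.2 e.1 ++ scale (-1) (gen0_list e.1 e.2)
  | inr t => gen0_list t.1.1 t.2 ++ scale (-1) (gen0_list t.1.1 t.1.2)
  end.
Definition boundary1_list (s : seq (Cell1 * int)) : seq ((V * V) * int) :=
  flatten [seq scale p.2 (bd1_list p.1) | p <- s & cell1_p p.1].

Lemma gen0E x z : gen0 x z = chain_of (gen0_list x z).
Proof. exact: chain_of_unit. Qed.

Lemma gen1EE x z : gen1E x z = chain_of (gen1E_list x z).
Proof.
by rewrite /gen1E /gen1E_list; case: ifP => _; [exact: chain_of_unit | exact: chain_of_opp_unit].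
Qed.

Lemma gen1AE x a b : gen1A x a b = chain_of (gen1A_list x a b).
Proof.
rewrite /gen1A /gen1A_list /=.
by case: (canon x); (case: ifP => _; [exact: chain_of_unit | exact: chain_of_opp_unit]).
Qed.

Lemma deltaE x z : delta x z = chain_of (delta_list x z).
Proof. by rewrite /delta chain_of_cat chain_of_scale !gen1EE mulrN1z. Qed.

Lemma u_edgeE (P : pred V) : u_edge [set v | P v] = chain_of (u_edge_list P).
Proof.
rewrite /u_edge (eq_bigl P) => [|x]; last by rewrite inE.
rewrite (perm_big _ perm_vertices) -chain_of_flatten; apply: eq_bigr => x _.
by rewrite (perm_big _ perm_vertices) -chain_of_flatten; apply: eq_bigr => z _; apply: deltaE.
Qed.

Lemma bd2E f : bd2 f = chain_of (bd2_list f).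
Proof.
rewrite /bd2 (perm_big _ perm_vertex_pairs) -chain_of_flatten; apply: eq_bigr => xz _.
rewrite chain_of_cat gen1EE (perm_big _ perm_vertices) -chain_of_flatten.
by congr (_ + _); apply: eq_bigr => w _; apply: gen1AE.
Qed.

Lemma boundary2E w : boundary2 (face_chain w) = chain_of (boundary2_list w).
Proof.
rewrite /boundary2 (perm_big _ perm_faces) -chain_of_flatten; apply: eq_bigr => f _.
by rewrite ffunE bd2E chain_of_scale.
Qed.

Lemma bd1E c : bd1 c = chain_of (bd1_list c).
Proof. by case: c => [e|t]; rewrite /bd1 chain_of_cat chain_of_scale !gen0E mulrN1z. Qed.

Lemma boundary1E s : boundary1 (chain_of s) = chain_of (boundary1_list s).
Proof.
rewrite /boundary1; under eq_bigr do rewrite ffunE.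
rewrite sum_coef -chain_of_flatten; apply: eq_bigr => p _.
by rewrite bd1E chain_of_scale.
Qed.

(* Given sparse 1-chains u and b, the candidate cycle is one
   third of u - b, rounded coefficientwise; the pair is certified when this
   candidate is a cellular 1-cycle and the division by 3 was exact. *)
Definition third (s : seq (Cell1 * int)) : seq (Cell1 * int) :=
  [seq (c, (coef s c %/ 3)%Z) | c <- undup (map fst s)].
Definition certificate (u b : seq (Cell1 * int)) : bool :=
  let z := third (u ++ scale (-1) b) in
  [&& all (fun p => cell1_p p.1) z, same_chain (boundary1_list z) [::] &
      same_chain u (scale 3 z ++ b)].

Lemma certificate_sound u b : certificate u b ->
  exists z : C1, [/\ forall c, ~~ cell1_p c -> z c = 0, boundary1 z = 0 &
                     chain_of u = z *~ 3 + chain_of b].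
Proof.
case/and3P=> z_cells z_cycle z_div3; exists (chain_of (third (u ++ scale (-1) b))).
split.
- by move=> c c_out; rewrite ffunE (coef_supp z_cells c_out).
- by rewrite boundary1E (same_chainP z_cycle) chain_of_nil.
- by rewrite -chain_of_scale -chain_of_cat; apply: same_chainP.
Qed.

Definition certified (t : seq V) (w : seq int) : bool :=
  certificate (u_edge_list (mem t)) (boundary2_list w).

Lemma certified_div3 t w : certified t w -> u_edge_div3 [set v | v \in t].
Proof.
rewrite /certified => /certificate_sound [z [z_cells z_cycle z_div3]].
exists z; split=> //; split=> //; exists (face_chain w).
by rewrite (u_edgeE (mem t)) boundary2E.
Qed.

Definition tetrahedra : seq (seq V * seq int) := [::
  ([:: inl (true,true,true); inl (true,false,false); inl (false,true,false); inl (false,false,true)], [:: 2; 1; 0; 2; 1; 0; 2; 1; 0; 2; 1; 0]);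
  ([:: inl (true,true,true); inr (true,false,Ax0); inr (true,false,Ax1); inr (true,false,Ax2)], [:: 2; 1; 0; 1; 0; 2; 1; 0; 2; 2; 1; 0]);
  ([:: inl (true,true,false); inl (true,false,true); inl (false,true,true); inl (false,false,false)], [:: 1; 2; 0; 1; 2; 0; 1; 2; 0; 1; 2; 0]);
  ([:: inl (true,true,false); inr (true,true,Ax0); inr (true,false,Ax1); inr (false,false,Ax2)], [:: 1; 1; 0; 0; 2; 2; 0; 2; 2; 1; 1; 0]);
  ([:: inl (true,false,true); inr (true,true,Ax1); inr (true,false,Ax2); inr (false,false,Ax0)], [:: 2; 0; 0; 1; 2; 1; 1; 2; 1; 2; 0; 0]);
  ([:: inl (true,false,false); inr (true,true,Ax1); inr (false,true,Ax0); inr (false,false,Ax2)], [:: 0; 1; 0; 2; 2; 1; 2; 2; 1; 0; 1; 0]);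
  ([:: inl (false,true,true); inr (true,true,Ax2); inr (true,false,Ax0); inr (false,false,Ax1)], [:: 0; 2; 0; 1; 1; 2; 1; 1; 2; 0; 2; 0]);
  ([:: inl (false,true,false); inr (true,true,Ax0); inr (false,true,Ax2); inr (false,false,Ax1)], [:: 1; 0; 0; 2; 1; 2; 2; 1; 2; 1; 0; 0]);
  ([:: inl (false,false,true); inr (true,true,Ax2); inr (false,true,Ax1); inr (false,false,Ax0)], [:: 2; 2; 0; 0; 1; 1; 0; 1; 1; 2; 2; 0]);
  ([:: inl (false,false,false); inr (false,true,Ax0); inr (false,true,Ax1); inr (false,true,Ax2)], [:: 1; 2; 0; 2; 0; 1; 2; 0; 1; 1; 2; 0])].

Lemma tetrahedra_certified : all (fun tw => certified tw.1 tw.2) tetrahedra.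
Proof. by vm_compute. Qed.

(* Guards are written with if-then-else
   rather than || so that evaluation short-circuits. *)
Definition listed_regular_quadruples : bool :=
  let d x y := sqdist (coords x) (coords y) in
  all (fun x => all (fun y => if y == x then true else all (fun z =>
    if [|| z == x, z == y, d x z != d x y | d y z != d x y] then true else
    all (fun w =>
      if [|| w == x, w == y, w == z, d x w != d x y, d y w != d x y | d z w != d x y]
      then true else
      has (fun tw => all (fun v => (v \in [:: x; y; z; w]) == (v \in tw.1)) vertices)
        tetrahedra) vertices) vertices) vertices) vertices.

Lemma listed_regular_quadruplesP : listed_regular_quadruples.
Proof. by vm_compute. Qed.

Lemma regular_tetrahedron_listed (S : {set V}) (r : Zphi) :
  #|S| = 4%N -> {in S &, forall x y, x != y -> sqdist (coords x) (coords y) = r} ->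
  exists2 tw, tw \in tetrahedra & S =i tw.1.
Proof.
move=> S_card S_reg; have S_uniq := enum_uniq (pred_of_set S).
have S_enum : S =i enum S by move=> v; rewrite mem_enum.
move: S_uniq S_enum; rewrite cardE in S_card.
case: (enum S) S_card => [|x [|y [|z [|w [|? ?]]]]] //= _.
rewrite !inE !negb_or -!andbA => /and4P [xy xz xw /and4P [yz yw zw _]] S_xyzw.
have d u v : u \in [:: x; y; z; w] -> v \in [:: x; y; z; w] -> u != v ->
    sqdist (coords u) (coords v) = r by rewrite -!S_xyzw; apply: S_reg.
have [dxy dxz dyz] : [/\ sqdist (coords x) (coords y) = r,
    sqdist (coords x) (coords z) = r & sqdist (coords y) (coords z) = r].
  by split; apply: d; rewrite ?inE ?eqxx ?orbT.
have [dxw dyw dzw] : [/\ sqdist (coords x) (coords w) = r,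
    sqdist (coords y) (coords w) = r & sqdist (coords z) (coords w) = r].
  by split; apply: d; rewrite ?inE ?eqxx ?orbT.
move: listed_regular_quadruplesP => /allP/(_ x (mem_vertices x))/allP.
move=> /(_ y (mem_vertices y)); rewrite ifN ?(eq_sym y) // => /allP.
move=> /(_ z (mem_vertices z)); rewrite ifN => [/allP|]; last first.
  by rewrite ![z == _]eq_sym !negb_or xz yz dxy dxz dyz eqxx.
move=> /(_ w (mem_vertices w)); rewrite ifN => [/hasP [tw tw_in /allP tw_S]|]; last first.
  by rewrite ![w == _]eq_sym !negb_or xw yw zw dxy dxw dyw dzw eqxx.
exists tw => // v.
by rewrite S_xyzw; apply/eqP; apply: tw_S (mem_vertices v).
Qed.

Lemma hamming_cases (a b : bool * bool * bool) :
  a != b -> [|| hamming a b == 1%N, hamming a b == 2%N | hamming a b == 3%N].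
Proof. by case: a b => [[[] []] []] [[[] []] []]. Qed.

Lemma antipodes_dominate (a b c : bool * bool * bool) :
  hamming a b = 3%N -> c != a -> c != b -> (hamming a c == 1%N) || (hamming b c == 1%N).
Proof. by case: a b c => [[[] []] []] [[[] []] []] [[[] []] []]. Qed.

(* Hence in a 4-set of pairwise non-adjacent cube vertices, any two distinct
   points are at distance 2: a pair of antipodes would leave no room for the
   other two points. *)
Lemma independent4_distance2 (E : {set bool * bool * bool}) :
  #|E| = 4%N -> {in E &, forall a b, a != b -> hamming a b != 1%N} ->
  {in E &, forall a b, a != b -> hamming a b = 2%N}.
Proof.
move=> E_card E_indep a b aE bE ab.
case/or3P: (hamming_cases ab) => [/eqP h1|/eqP //|/eqP h3].
  by move: (E_indep a b aE bE ab); rewrite h1.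
have [c cE] : exists2 c, c \in E & c \notin [set a; b].
  apply/subsetPn/negP => /subset_leq_card.
  by rewrite E_card cards2 ab.
rewrite !inE negb_or => /andP [ca cb].
have := antipodes_dominate h3 ca cb.
by rewrite (negbTE (E_indep a c aE cE _)) ?(negbTE (E_indep b c bE cE _)) 1?eq_sym.
Qed.

Theorem corollary3p8 (f : bool * bool * bool -> V) (s : Zphi)
    (E : {set bool * bool * bool}) :
  injective f ->
  (forall a b, sqdist (coords (f a)) (coords (f b)) = zmul s ((hamming a b)%:Z, 0)) ->
  #|E| = 4%N ->
  {in E &, forall a b, a != b -> hamming a b != 1%N} ->
  exists z : C1,
    (forall c, ~~ cell1_p c -> z c = 0) /\ boundary1 z = 0 /\
    exists b : C2, u_edge (f @: E) = z *~ 3 + boundary2 b.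
Proof.
move=> f_inj f_dist E_card E_indep.
have E_dist2 := independent4_distance2 E_card E_indep.
have [tw tw_in fE_tw] : exists2 tw, tw \in tetrahedra & f @: E =i tw.1.
  apply: (@regular_tetrahedron_listed _ (zmul s (2%:Z, 0))).
    by rewrite card_imset.
  move=> _ _ /imsetP [a aE ->] /imsetP [b bE ->] fab.
  by rewrite f_dist E_dist2 //; apply: contraNneq fab => ->.
have -> : f @: E = [set v | v \in tw.1] by apply/setP => v; rewrite inE fE_tw.
exact: certified_div3 (allP tetrahedra_certified _ tw_in).
Qed.
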